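(* Let $T\in\mathcal{M}_k(F)$ be a decision table and $\psi$ a complexity measure over $\mathcal{M}_k(F)$. Then $\psi^a(T)\le\psi^d(T)\le\psi^i(T)$.
   Context: Let $\mathbb{N}=\{0,1,2,\dots\}$; for an integer $k\ge 2$ let $E_k=\{0,1,\dots,k-1\}$; let $\mathcal{P}(\mathbb{N})$ be the set of nonempty finite subsets of $\mathbb{N}$. Let $F$ be a nonempty set (of attribute names). A decision table $T\in\mathcal{M}_k(F)$ is a rectangular table with $n\ge 1$ columns labeled with attributes $f_1,\dots,f_n\in F$ (any two columns labeled with the same attribute are equal), whose rows are pairwise different tuples from $E_k^n$ (the set of rows may be empty), each row being labeled with a set of decisions from $\mathcal{P}(\mathbb{N})$. Write $At(T)=\{f_1,\dots,f_n\}$ and $\Delta(T)$ for the set of rows. For a word $\alpha=(f_{i_1},\delta_1)\cdots(f_{i_m},\delta_m)$ with $f_{i_j}\in At(T)$, $\delta_j\in E_k$, the subtable $T\alpha$ consists of the rows of $T$ having value $\delta_j$ in column $f_{i_j}$ for all $j$ ($T\lambda=T$ for the empty word $\lambda$). A decision tree over $\mathcal{M}_k(F)$ is a finite directed tree with a root (unique node with no entering edge) and at least two nodes such that the root and the edges leaving the root are unlabeled, each worker node (neither root nor terminal) is labeled with an attribute from $F$, each edge leaving a worker node is labeled with a number from $E_k$, and each terminal node is labeled with a number from $\mathbb{N}$. For a complete path $\xi$ (root to terminal node) whose worker nodes are labeled $f_{j_1},\dots,f_{j_m}$ in order, with the edges leaving them labeled $\delta_1,\dots,\delta_m$, put $\pi(\xi)=(f_{j_1},\delta_1)\cdots(f_{j_m},\delta_m)$,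 $\varphi(\xi)=f_{j_1}\cdots f_{j_m}$ (both empty if $m=0$), and let $\tau(\xi)$ be the label of its terminal node. A nondeterministic decision tree for $T$ is a decision tree $\Gamma$ whose worker-node attributes lie in $At(T)$, such that $\bigcup_{\xi}\Delta(T\pi(\xi))=\Delta(T)$ (union over complete paths), and for every row $r\in\Delta(T)$ and every complete path $\xi$ with $r\in\Delta(T\pi(\xi))$, $\tau(\xi)$ belongs to the decision set of $r$. A decision tree is deterministic if exactly one edge leaves the root and the edges leaving each worker node have pairwise different labels; a deterministic decision tree for $T$ is a deterministic decision tree that is a nondeterministic decision tree for $T$. A complexity measure over $\mathcal{M}_k(F)$ is any map $\psi:F^*\to\mathbb{N}$, where $F^*$ is the set of finite words over $F$ including the empty word $\lambda$. For a tree, $\psi(\Gamma)=\max_\xi\psi(\varphi(\xi))$ over complete paths. For $T$ with columns labeled $f_1,\dots,f_n$: $\psi^i(T)=\psi(f_1\cdots f_n)$, $\psi^d(T)$ is the minimum complexity of a deterministic decision tree for $T$, $\psi^a(T)$ the minimum complexity of a nondeterministic decision tree for $T$. *)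

From mathcomp Require Import all_boot.
From Stdlib Require List.
Set Implicit Arguments. Unset Strict Implicit. Unset Printing Implicit Defensive.

(* A table: column labels (attributes) f_1..f_n, and rows, each row being
   a tuple of values (seq nat of length n) together with its decision set
   (a nonempty finite subset of N, represented by a nonempty seq nat). *)
Record dtable (F : Type) := DTable {
  dt_attrs : seq F;
  dt_rows  : seq (seq nat * seq nat)
}.

Definition wf_table (F : Type) (k : nat) (T : dtable F) : Prop :=
  [/\ 0 < size (dt_attrs T),
      (forall r, List.In r (dt_rows T) ->
          [/\ size r.1 = size (dt_attrs T), all (fun v => v < k) r.1 & r.2 <> [::]]),
      uniq (map fst (dt_rows T)) &
      (forall i j f, List.nth_error (dt_attrs T) i = Some f ->
                     List.nth_error (dt_attrs T) j = Some f ->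
         forall r, List.In r (dt_rows T) -> nth 0 r.1 i = nth 0 r.1 j)].

Definition in_sub (F : Type) (T : dtable F) (alpha : seq (F * nat)) (r : seq nat) : Prop :=
  forall f d, List.In (f, d) alpha ->
    forall i, List.nth_error (dt_attrs T) i = Some f -> nth 0 r i = d.

(* A non-root node: a terminal node labelled with a number, or a worker node
   labelled with an attribute together with its outgoing edges (label, child). *)
Inductive dnode (F : Type) : Type :=
| Leaf of nat
| Work of F & seq (nat * dnode F).

(* A decision tree: the (unlabelled) root given by the list of its children
   (reached through unlabelled edges). *)
Definition dtree (F : Type) := seq (dnode F).

Inductive wf_node (F : Type) (k : nat) (A : F -> Prop) : dnode F -> Prop :=
| wf_leaf d : wf_node k A (Leaf F d)
| wf_work f ch :
    A f -> ch <> [::] ->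
    (forall d c, List.In (d, c) ch -> d < k) ->
    (forall d c, List.In (d, c) ch -> wf_node k A c) ->
    wf_node k A (Work f ch).

(* decision tree over M_k(F) whose worker attributes satisfy A
   (at least two nodes: the root has at least one child) *)
Definition wf_tree (F : Type) (k : nat) (A : F -> Prop) (G : dtree F) : Prop :=
  G <> [::] /\ (forall c, List.In c G -> wf_node k A c).

(* node_path c p t : p = pi of a path from node c down to a terminal node labelled t *)
Inductive node_path (F : Type) : dnode F -> seq (F * nat) -> nat -> Prop :=
| np_leaf t : node_path (Leaf F t) [::] t
| np_work f ch d c p t :
    List.In (d, c) ch -> node_path c p t -> node_path (Work f ch) ((f, d) :: p) t.

Definition tree_path (F : Type) (G : dtree F) (p : seq (F * nat)) (t : nat) : Prop :=
  exists2 c, List.In c G & node_path c p t.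

Inductive det_node (F : Type) : dnode F -> Prop :=
| det_leaf t : det_node (Leaf F t)
| det_work f ch :
    uniq (map fst ch) ->
    (forall d c, List.In (d, c) ch -> det_node c) ->
    det_node (Work f ch).

Definition det_tree (F : Type) (G : dtree F) : Prop :=
  exists c, G = [:: c] /\ det_node c.

Definition ndtree_for (F : Type) (k : nat) (T : dtable F) (G : dtree F) : Prop :=
  [/\ wf_tree k (fun f => List.In f (dt_attrs T)) G,
      (forall r, List.In r (dt_rows T) ->
          exists p t, tree_path G p t /\ in_sub T p r.1) &
      (forall r p t, List.In r (dt_rows T) -> tree_path G p t ->
          in_sub T p r.1 -> t \in r.2)].

Definition dtree_for (F : Type) (k : nat) (T : dtable F) (G : dtree F) : Prop :=
  det_tree G /\ ndtree_for k T G.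

Definition tree_complexity (F : Type) (psi : seq F -> nat) (G : dtree F) (c : nat) : Prop :=
  (exists p t, tree_path G p t /\ psi (map fst p) = c) /\
  (forall p t, tree_path G p t -> psi (map fst p) <= c).

Definition is_min (P : nat -> Prop) (m : nat) : Prop :=
  P m /\ (forall m', P m' -> m <= m').

Definition det_values (F : Type) (k : nat) (psi : seq F -> nat) (T : dtable F) (c : nat) : Prop :=
  exists G, dtree_for k T G /\ tree_complexity psi G c.

Definition nondet_values (F : Type) (k : nat) (psi : seq F -> nat) (T : dtable F) (c : nat) : Prop :=
  exists G, ndtree_for k T G /\ tree_complexity psi G c.

Definition psi_i (F : Type) (psi : seq F -> nat) (T : dtable F) : nat := psi (dt_attrs T).

From Stdlib Require Import Classical.
From mathcomp Require Import all_boot.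
Set Implicit Arguments. Unset Strict Implicit. Unset Printing Implicit Defensive.

(* The trivial inclusion of deterministic trees among nondeterministic ones gives
   psi^a(T) <= psi^d(T).  For psi^d(T) <= psi^i(T), take the complete
   deterministic tree that queries the columns f_1, ..., f_n in order, branching
   on every value in E_k, and labels each leaf with a decision of the row read
   along its path (if there is one).  Every complete path of this tree has
   attribute word f_1 ... f_n, so its complexity is exactly psi^i(T). *)

Lemma is_min_exists (P : nat -> Prop) n : P n -> exists m, is_min P m.
Proof.
elim/ltn_ind: n => n IH Pn.
have [[m [lt_mn Pm]] | no_smaller] := classic (exists m, m < n /\ P m).
  exact: IH lt_mn Pm.
exists n; split=> // m Pm; rewrite leqNgt; apply/negP => lt_mn.
by apply: no_smaller; exists m.
Qed.

Lemma is_min_le (P Q : nat -> Prop) a b :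
  (forall c, Q c -> P c) -> is_min P a -> is_min Q b -> a <= b.
Proof. by move=> QP [_ minP] [Qb _]; exact/minP/QP. Qed.

Lemma In_mem (T : eqType) (x : T) s : List.In x s -> x \in s.
Proof. by elim: s => //= y s IH [->|/IH y_s]; rewrite inE ?eqxx ?y_s ?orbT. Qed.

Lemma nth_error_zip (F : Type) (fs : seq F) (ws : seq nat) j f :
  size ws = size fs -> List.nth_error fs j = Some f ->
  List.In (f, nth 0 ws j) (zip fs ws).
Proof.
elim: fs ws j => [|g fs IH] [|w ws] [|j] //= [size_ws].
- by move=> [->]; left.
- by move=> fs_j; right; apply: IH.
Qed.

Lemma In_zip_nth_error (F : Type) (fs : seq F) (ws : seq nat) f d :
  List.In (f, d) (zip fs ws) ->
  exists j, List.nth_error fs j = Some f /\ d = nth 0 ws j.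
Proof.
elim: fs ws => [|g fs IH] [|w ws] //= [[-> ->]|/IH [j fs_j]]; first by exists 0.
by exists j.+1.
Qed.

Section CompleteTree.
Variables (F : Type) (k : nat).

Fixpoint complete_node (fs : seq F) (lab : seq nat -> nat) : dnode F :=
  if fs is f :: fs' then
    Work f [seq (d, complete_node fs' (fun ws => lab (d :: ws))) | d <- iota 0 k]
  else Leaf F (lab [::]).

Lemma node_path_complete fs lab p t : node_path (complete_node fs lab) p t ->
  exists ws, [/\ size ws = size fs, p = zip fs ws & t = lab ws].
Proof.
elim: fs lab p t => [|f fs IH] lab p t path_p.
  by inversion path_p; exists [::].
inversion path_p as [|f' ch d c p' t' in_ch path_c]; subst.
case/List.in_map_iff: in_ch => d' [[<- e_c] _]; subst c.
have [ws [size_ws -> ->]] := IH _ _ _ path_c.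
by exists (d' :: ws); rewrite /= size_ws.
Qed.

Lemma complete_node_path fs lab ws :
  size ws = size fs -> all (fun v => v < k) ws ->
  node_path (complete_node fs lab) (zip fs ws) (lab ws).
Proof.
elim: fs lab ws => [|f fs IH] lab [|w ws] //=; first by constructor.
move=> [size_ws] /andP [w_lt_k ws_lt_k].
apply: np_work (IH (fun ws => lab (w :: ws)) ws size_ws ws_lt_k).
apply/List.in_map_iff; exists w; split=> //.
by apply/List.in_seq; split=> //; apply/leP.
Qed.

Lemma complete_node_wf (A : F -> Prop) fs lab :
  0 < k -> (forall f, List.In f fs -> A f) -> wf_node k A (complete_node fs lab).
Proof.
move=> k_gt0; elim: fs lab => [|f fs IH] lab Afs /=; constructor.
- by apply: Afs; left.
- by case: k k_gt0.
- by move=> d c /List.in_map_iff [d' [[<- _] /List.in_seq [_ /leP]]].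
- by move=> d c /List.in_map_iff [d' [[_ <-] _]]; apply: IH => g fs_g; apply: Afs; right.
Qed.

Lemma complete_node_det fs lab : det_node (complete_node fs lab).
Proof.
elim: fs lab => [|f fs IH] lab /=; constructor.
- by rewrite -map_comp map_id iota_uniq.
- by move=> d c /List.in_map_iff [d' [[_ <-] _]].
Qed.

Lemma complete_tree_complexity (psi : seq F -> nat) fs lab :
  0 < k -> tree_complexity psi [:: complete_node fs lab] (psi fs).
Proof.
move=> k_gt0; split.
  exists (zip fs (nseq (size fs) 0)), (lab (nseq (size fs) 0)); split.
    exists (complete_node fs lab); first by left.
    by apply: complete_node_path; rewrite ?size_nseq ?all_nseq ?k_gt0 ?orbT.
  by congr psi; apply: unzip1_zip; rewrite size_nseq.
move=> p t [c [<-|//] /node_path_complete [ws [size_ws -> _]]].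
by have -> : map fst (zip fs ws) = fs by apply: unzip1_zip; rewrite size_ws.
Qed.

End CompleteTree.

Section DecisionTable.
Variables (F : Type) (k : nat) (T : dtable F).
Hypothesis T_wf : wf_table k T.

(* The first decision of the row with value tuple [x]; junk value 0 when T has no such row. *)
Definition table_decision (x : seq nat) : nat :=
  head 0 (head ([::], [::]) [seq q <- dt_rows T | q.1 == x]).2.

Lemma table_decision_row r : List.In r (dt_rows T) -> table_decision r.1 \in r.2.
Proof.
case: T_wf => _ T_rows T_uniq _ T_r; have [_ _ r_dec] := T_rows r T_r.
rewrite /table_decision.
suff -> : head ([::], [::]) [seq q <- dt_rows T | q.1 == r.1] = r.
  by case: r.2 r_dec => // d ds _; rewrite inE eqxx.
elim: (dt_rows T) T_uniq T_r => //= q s IH /andP [q_notin uniq_s] [->|r_s].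
  by rewrite eqxx.
case: eqP => [q_r|_]; last exact: IH.
by case/negP: q_notin; rewrite q_r; apply/map_f/In_mem.
Qed.

Lemma in_sub_row r :
  List.In r (dt_rows T) -> in_sub T (zip (dt_attrs T) r.1) r.1.
Proof.
case: T_wf => _ _ _ T_dup T_r f d fd_zip i attr_i.
have [j [attr_j ->]] := In_zip_nth_error fd_zip.
exact: (T_dup i j f attr_i attr_j r T_r).
Qed.

Lemma in_sub_zip_eq ws x :
  size ws = size (dt_attrs T) -> size x = size (dt_attrs T) ->
  in_sub T (zip (dt_attrs T) ws) x -> ws = x.
Proof.
move=> size_ws size_x sub_x; apply: (@eq_from_nth _ 0); first by rewrite size_ws.
move=> j; rewrite size_ws => /leP /List.nth_error_Some.
case attr_j: (List.nth_error _ j) => [f|] // _.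
by rewrite (sub_x _ _ (nth_error_zip size_ws attr_j) j attr_j).
Qed.

Lemma complete_tree_for :
  0 < k -> dtree_for k T [:: complete_node k (dt_attrs T) table_decision].
Proof.
move=> k_gt0; have T_wf' := T_wf; case: T_wf' => _ T_rows _ _.
split; first by eexists; split; [reflexivity | exact: complete_node_det].
split.
- split=> // c [<-|//]; exact: complete_node_wf.
- move=> r T_r; have [size_r r_lt_k _] := T_rows r T_r.
  exists (zip (dt_attrs T) r.1), (table_decision r.1); split; last exact: in_sub_row.
  by eexists; [left | apply: complete_node_path].
- move=> r p t T_r [c [<-|//] /node_path_complete [ws [size_ws -> ->]]] sub_r.
  have [size_r _ _] := T_rows r T_r.
  by rewrite (in_sub_zip_eq size_ws size_r sub_r); apply: table_decision_row.
Qed.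

End DecisionTable.

Lemma det_values_nondet (F : Type) k psi (T : dtable F) c :
  det_values k psi T c -> nondet_values k psi T c.
Proof. by case=> G [[_ G_for] G_c]; exists G. Qed.

Theorem lemma1 (F : Type) (k : nat) (T : dtable F) (psi : seq F -> nat) :
  2 <= k -> wf_table k T ->
  exists psia psid,
    [/\ is_min (nondet_values k psi T) psia,
        is_min (det_values k psi T) psid,
        psia <= psid &
        psid <= psi_i psi T].
Proof.
move=> k_ge2 T_wf; have k_gt0 : 0 < k by apply: leq_trans k_ge2.
have complete_val : det_values k psi T (psi_i psi T).
  by eexists; split; [exact: complete_tree_for | exact: complete_tree_complexity].
have [psid min_d] := is_min_exists complete_val.
have [psia min_a] := is_min_exists (det_values_nondet min_d.1).
exists psia, psid; split=> //.
- by apply: is_min_le min_a min_d => c; apply: det_values_nondet.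
- exact: min_d.2 _ complete_val.
Qed.
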